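(* Let $Q$ be a set and let $\{*_\alpha\}_{\alpha\in\Lambda}$ be a family of quandle operations on $Q$ that are pairwise distributive with respect to each other, i.e. $(a*_\alpha b)*_\beta c=(a*_\beta c)*_\alpha(b*_\beta c)$ for all $\alpha,\beta\in\Lambda$ and $a,b,c\in Q$. Let $F$ be the free group on the symbols $*_\alpha$, $\alpha\in\Lambda$. For $w\in F$ written as a word $s_1\cdots s_k$ with each $s_i\in\{*_\alpha,*_\alpha^{-1}:\alpha\in\Lambda\}$, define $\star_w\colon Q\times Q\to Q$ by $$a\star_w b=(\cdots((a\,s_1\,b)\,s_2\,b)\cdots)\,s_k\,b,$$ where the letter $*_\alpha^{-1}$ acts as the right inverse operation $\bar*_\alpha$ of $*_\alpha$ (and the empty word gives $a\star_e b=a$). Then every $(Q,\star_w)$, $w\in F$, is a quandle, and the set $\{(Q,\star_w)\mid w\in F\}$ is closed under quandle multiplication.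
   Context: A quandle operation on $Q$ is a binary operation $*$ with $x*x=x$, unique right division, and $(x*y)*z=(x*z)*(y*z)$. The right inverse $\bar*$ of $*$ is defined by $a=c*b\iff c=a\,\bar*\,b$. The (quandle) multiplication of two groupoid structures $(Q,\circ)$ and $(Q,* )$ on the same set is $(Q,\circ)(Q,* )=(Q,\circ* )$, where $a\,(\circ* )\,b=(a\circ b)*b$. *)

From mathcomp Require Import all_boot.
Set Implicit Arguments. Unset Strict Implicit. Unset Printing Implicit Defensive.

Definition binop (Q : Type) := Q -> Q -> Q.

Definition is_quandle (Q : Type) (op : binop Q) : Prop :=
  [/\ forall x, op x x = x,
      forall a b, exists c, op c b = a /\ forall c', op c' b = a -> c' = c
    & forall x y z, op (op x y) z = op (op x z) (op y z)].

Definition is_right_inverse (Q : Type) (op inv : binop Q) : Prop :=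
  forall a b c, a = op c b <-> c = inv a b.

Definition qmul (Q : Type) (o s : binop Q) : binop Q :=
  fun a b => s (o a b) b.

(* Letters of the free group on L: (al, true) is op al, (al, false) is its inverse letter. *)
Definition letter (L : Type) := (L * bool)%type.

Fixpoint reduced (L : Type) (s : seq (letter L)) : Prop :=
  match s with
  | x :: ((y :: _) as t) => ~ (x.1 = y.1 /\ x.2 <> y.2) /\ reduced t
  | _ => True
  end.

Definition free_group (L : Type) := { s : seq (letter L) | reduced s }.

Definition star_word (L Q : Type) (op inv : L -> binop Q)
  (s : seq (letter L)) : binop Q :=
  fun a b => foldl (fun x l => if l.2 then op l.1 x b else inv l.1 x b) a s.

Definition star (L Q : Type) (op inv : L -> binop Q) (w : free_group L) : binop Q :=
  star_word op inv (proj1_sig w).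

(* Each letter acts on Q by a map [x |-> x *_al z] or [x |-> x /_al z] that is
   an endomorphism of every operation [*_be] (this is pairwise distributivity,
   transported to the right inverses), so a word w acts by such an
   endomorphism as well; this is right self-distributivity of [star w].
   Idempotency is inherited letter by letter, and right division by w is the
   action of the inverse word.  The product of [star w1] and [star w2] is the
   action of the concatenation of w1 and w2, and cancelling adjacent pairs
   x x^-1 does not change the action, so it is the action of a reduced word. *)

From Stdlib Require Import Classical.
From Pilot Require Import Defs.
From mathcomp Require Import all_boot.

Set Implicit Arguments.
Unset Strict Implicit.
Unset Printing Implicit Defensive.

Section RightInverse.

Variables (Q : Type) (op inv : binop Q).
Hypothesis hinv : is_right_inverse op inv.

Lemma op_invK a b : op (inv a b) b = a.
Proof. exact/esym/(hinv _ _ _).2. Qed.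

Lemma inv_opK c b : inv (op c b) b = c.
Proof. exact/esym/(hinv _ _ _).1. Qed.

Lemma inv_idem : (forall x, op x x = x) -> forall x, inv x x = x.
Proof. by move=> op_idem x; rewrite -{1}(op_idem x) inv_opK. Qed.

End RightInverse.

Section StarWord.

Variables (Q L : Type) (op inv : L -> binop Q).
Hypothesis hinv : forall al, is_right_inverse (op al) (inv al).

Definition letter_act (l : letter L) (x b : Q) : Q :=
  if l.2 then op l.1 x b else inv l.1 x b.

Definition letter_inv (l : letter L) : letter L := (l.1, ~~ l.2).

Definition word_inv (s : seq (letter L)) : seq (letter L) :=
  rev (map letter_inv s).

Local Notation star_word := (star_word op inv).

Lemma star_word_cons l s a b :
  star_word (l :: s) a b = star_word s (letter_act l a b) b.
Proof. by []. Qed.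

Lemma star_word_cat s t : star_word (s ++ t) =2 qmul (star_word s) (star_word t).
Proof. by move=> a b; rewrite /qmul /Defs.star_word foldl_cat. Qed.

Lemma letter_invK : involutive letter_inv.
Proof. by case=> al []. Qed.

Lemma word_invK : involutive word_inv.
Proof. by move=> s; rewrite /word_inv map_rev revK (mapK letter_invK). Qed.

Lemma letter_inv_of_cancelling l m : l.1 = m.1 -> l.2 <> m.2 -> m = letter_inv l.
Proof. by case: l m => al [] [be []] //= -> _. Qed.

Lemma letter_actK l b : cancel (letter_act l ^~ b) (letter_act (letter_inv l) ^~ b).
Proof.
by case: l => al [] x; rewrite /letter_act /= ?(inv_opK (hinv _)) ?(op_invK (hinv _)).
Qed.

Lemma star_wordK s b : cancel (star_word s ^~ b) (star_word (word_inv s) ^~ b).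
Proof.
move=> a; rewrite /Defs.star_word /word_inv foldl_rev foldr_map.
elim: s a => //= l s IHs a.
by rewrite IHs; apply: letter_actK.
Qed.

Lemma star_word_invK s b : cancel (star_word (word_inv s) ^~ b) (star_word s ^~ b).
Proof. by rewrite -{2}(word_invK s); apply: star_wordK. Qed.

Lemma star_word_reduce s :
  exists2 r, reduced r & star_word r =2 star_word s.
Proof.
elim: s => [|l s [[|m t] red_r eq_r]]; first by exists [::].
- by exists [:: l] => // a b; rewrite !star_word_cons eq_r.
- have [[eq1 neq2] | lm_irred] := classic (l.1 = m.1 /\ l.2 <> m.2).
    have m_inv := letter_inv_of_cancelling eq1 neq2.
    exists t; first by case: t red_r {eq_r} => // ? ? [].
    by move=> a b; rewrite star_word_cons -eq_r m_inv star_word_cons letter_actK.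
  exists [:: l, m & t] => // a b.
  by rewrite [LHS]star_word_cons [RHS]star_word_cons eq_r.
Qed.

Definition op_morph (f : Q -> Q) :=
  forall al x y, f (op al x y) = op al (f x) (f y).

Lemma op_morph_inv f al x y :
  op_morph f -> f (inv al x y) = inv al (f x) (f y).
Proof. by move=> fM; rewrite -{2}(op_invK (hinv al) x y) fM (inv_opK (hinv al)). Qed.

Lemma op_morph_star_word f s x y :
  op_morph f -> f (star_word s x y) = star_word s (f x) (f y).
Proof.
move=> fM; elim: s x => //= l s IHs x.
by rewrite IHs /letter_act; case: l.2; rewrite ?fM ?op_morph_inv.
Qed.

Hypothesis hdist : forall al be a b c,
  op be (op al a b) c = op al (op be a c) (op be b c).

Lemma op_morph_letter_act l z : op_morph (letter_act l ^~ z).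
Proof.
move=> al x y; rewrite /letter_act; case: l => be [] /=; first exact: hdist.
by apply/esym/(hinv be); rewrite hdist !(op_invK (hinv be)).
Qed.

Lemma star_word_distr s t x y z :
  star_word s (star_word t x y) z =
  star_word t (star_word s x z) (star_word s y z).
Proof.
elim: s x y => // l s IHs x y.
by rewrite !star_word_cons (op_morph_star_word t x y (op_morph_letter_act l z)) IHs.
Qed.

Hypothesis hq : forall al, is_quandle (op al).

Lemma star_word_idem s x : star_word s x x = x.
Proof.
elim: s => //= l s IHs; rewrite /letter_act.
have [op_idem _ _] := hq l.1.
by case: l.2; rewrite ?op_idem ?(inv_idem (hinv l.1) op_idem).
Qed.

Lemma star_word_quandle s : is_quandle (star_word s).
Proof.
split; [exact: star_word_idem | | exact: star_word_distr].
move=> a b; exists (star_word (word_inv s) a b).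
split=> [|c <-]; [exact: star_word_invK | exact/esym/star_wordK].
Qed.

End StarWord.

Theorem theorem4p12 (Q L : Type) (op inv : L -> binop Q)
  (hq : forall al, is_quandle (op al))
  (hinv : forall al, is_right_inverse (op al) (inv al))
  (hdist : forall al be a b c,
      op be (op al a b) c = op al (op be a c) (op be b c)) :
  (forall w : free_group L, is_quandle (star op inv w)) /\
  (forall w1 w2 : free_group L, exists w3 : free_group L,
      forall a b, star op inv w3 a b = qmul (star op inv w1) (star op inv w2) a b).
Proof.
split=> [w | [s1 ?] [s2 ?]]; first exact: star_word_quandle.
have [r red_r eq_r] := star_word_reduce hinv (s1 ++ s2).
by exists (exist _ r red_r) => a b; rewrite /star eq_r star_word_cat.
Qed.
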